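(* Let $R>0$, let $E\subset\mathbb{R}^d$ be an $R$-supported body and $A=co_R(E)$. Then: (i) $\partial E\subset\partial A$; (ii) $\operatorname{int}(E)\subset\operatorname{int}(A)$; (iii) $\mathcal{N}_R(E,a)=\mathcal{N}_R(A,a)$ for every $a\in\partial E$; (iv) $co_R(E)=E_R\cap\bigcap\{\mathbb{R}^d\setminus B(a+R\theta): a\in\partial E,\ \theta\in\mathcal{N}_R(E,a)\}$.
   Context: A body is a nonempty closed subset of $\mathbb{R}^d$. Fix $R>0$; $B(x)=\{y:|y-x|<R\}$; $S^{d-1}$ is the unit sphere. For a body $E$, $E_R=\{x:\operatorname{dist}(x,E)<R\}$. The $R$-hulloid is $co_R(E)=\bigcap\{\mathbb{R}^d\setminus B : B \text{ an open ball of radius } R,\ B\cap E=\emptyset\}$ (equal to $\mathbb{R}^d$ if no such ball exists). For a body $A$ and $a\in\partial A$, $\mathcal{N}_R(A,a)=\{v\in S^{d-1}: A\cap B(a+Rv)=\emptyset\}$ (the unit vectors $R$-supporting $A$ at $a$). A body $A$ is $R$-supported if $\mathcal{N}_R(A,a)\neq\emptyset$ for every $a\in\partial A$. *)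

(* Topological notions (closed, closure, interior) are those of the library's
   (product = Euclidean) topology on 'rV[R]_d; metric notions (balls, unit
   sphere, distance) use the Euclidean norm defined below. *)
From HB Require Import structures.
From mathcomp Require Import all_boot all_order all_algebra.
From mathcomp Require Import all_classical all_reals all_analysis.
Set Implicit Arguments. Unset Strict Implicit. Unset Printing Implicit Defensive.
Import Order.TTheory GRing.Theory Num.Theory.
Import numFieldNormedType.Exports.
Local Open Scope classical_set_scope.
Local Open Scope ring_scope.

Section Defs.
Context {R : realType} {d : nat}.
Notation V := 'rV[R]_d.

Definition enorm (v : V) : R := Num.sqrt (\sum_(i < d) (v ord0 i) ^+ 2).
Definition edist (x y : V) : R := enorm (x - y).

Definition eball (x : V) (r : R) : set V := [set y | edist y x < r].

Definition usphere : set V := [set v | enorm v = 1].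

Definition body (E : set V) : Prop := closed E /\ E !=set0.

Definition bdry (A : set V) : set V := closure A `\` A°.

Definition nbhdR (r : R) (E : set V) : set V :=
  [set x | exists2 y, E y & edist x y < r].

Definition hulloid (r : R) (E : set V) : set V :=
  [set x | forall c : V, eball c r `&` E = set0 -> ~ eball c r x].

Definition NR (r : R) (A : set V) (a : V) : set V :=
  [set v | usphere v /\ A `&` eball (a + r *: v) r = set0].

Definition Rsupported (r : R) (A : set V) : Prop :=
  body A /\ forall a, bdry A a -> NR r A a !=set0.
End Defs.

(* A ball that misses E also misses co_R(E), and E is contained in co_R(E); with
   the fact that a point with an R-supporting ball is never interior, this gives
   (i)-(iii).  For (iv), let x in E_R lie in an R-ball B(c) missing E.  Slide the
   centre from c towards x and stop at the infimum c' of the centres whose ball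
   comes within distance R of E: B(c') still misses E and contains x, and by
   compactness some a in E is at distance exactly R from c', so
   theta = (c' - a)/R is an R-supporting direction at a boundary point a with
   x in B(a + R theta). *)

From Pilot Require Import Defs.
From HB Require Import structures.
From mathcomp Require Import all_boot all_order all_algebra.
From mathcomp Require Import all_classical all_reals all_analysis.
From mathcomp Require Import ring lra.
(* mathcomp-analysis also exports an [edist]; ours is the Euclidean one. *)
Import Pilot.Defs.
Import Order.TTheory GRing.Theory Num.Theory.
Import numFieldNormedType.Exports.
Local Open Scope classical_set_scope.
Local Open Scope ring_scope.

Lemma CauchySchwarz_sum (R : realType) (I : finType) (a b : I -> R) :
  \sum_i a i * b i <= Num.sqrt (\sum_i a i ^+ 2) * Num.sqrt (\sum_i b i ^+ 2).
Proof.
set A := \sum_i a i ^+ 2; set B := \sum_i b i ^+ 2; set P := \sum_i a i * b i.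
have A_ge0 : 0 <= A by apply: sumr_ge0 => i _; exact: sqr_ge0.
have swap : \sum_i \sum_j a j ^+ 2 * b i ^+ 2 = A * B.
  by rewrite exchange_big big_distrlr.
have lagrange : \sum_i \sum_j (a i * b j - a j * b i) ^+ 2 = 2 * (A * B - P ^+ 2).
  have -> : \sum_i \sum_j (a i * b j - a j * b i) ^+ 2 =
      \sum_i \sum_j a i ^+ 2 * b j ^+ 2 + \sum_i \sum_j a j ^+ 2 * b i ^+ 2
      - 2 * \sum_i \sum_j a i * b i * (a j * b j).
    rewrite mulr_sumr -big_split -sumrB; apply: eq_bigr => i _.
    by rewrite mulr_sumr -big_split -sumrB; apply: eq_bigr => j _ /=; ring.
  by rewrite swap -!big_distrlr /= -/A -/B -/P; ring.
have : 0 <= 2 * (A * B - P ^+ 2).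
  by rewrite -lagrange; do 2!(apply: sumr_ge0 => ? _); exact: sqr_ge0.
rewrite pmulr_rge0 // subr_ge0 => PAB.
rewrite -sqrtrM // (le_trans (ler_norm P)) // -sqrtr_sqr ler_sqrt //.
by rewrite mulr_ge0 //; apply: sumr_ge0 => i _; exact: sqr_ge0.
Qed.

Section EuclideanNorm.
Context {R : realType} {d : nat}.
Implicit Types u v w : 'rV[R]_d.

Lemma sumsq_ge0 v : 0 <= \sum_(i < d) v ord0 i ^+ 2.
Proof. by apply: sumr_ge0 => i _; exact: sqr_ge0. Qed.

Lemma enorm_ge0 v : 0 <= enorm v.
Proof. exact: sqrtr_ge0. Qed.

Lemma enorm0 : enorm (0 : 'rV[R]_d) = 0.
Proof. by rewrite /enorm big1 ?sqrtr0 // => i _; rewrite mxE expr0n. Qed.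

Lemma enormZ k v : enorm (k *: v) = `|k| * enorm v.
Proof.
rewrite /enorm -sqrtr_sqr -sqrtrM ?sqr_ge0 // mulr_sumr.
by congr Num.sqrt; apply: eq_bigr => i _; rewrite mxE exprMn.
Qed.

Lemma enormN v : enorm (- v) = enorm v.
Proof. by rewrite -scaleN1r enormZ normrN normr1 mul1r. Qed.

Lemma enormD u v : enorm (u + v) <= enorm u + enorm v.
Proof.
rewrite -(ger0_norm (addr_ge0 (enorm_ge0 u) (enorm_ge0 v))) -sqrtr_sqr.
rewrite /enorm ler_sqrt ?sqr_ge0 // sqrrD !sqr_sqrtr ?sumsq_ge0 //.
have -> : \sum_(i < d) (u + v) ord0 i ^+ 2 = \sum_(i < d) u ord0 i ^+ 2
    + 2 * \sum_(i < d) u ord0 i * v ord0 i + \sum_(i < d) v ord0 i ^+ 2.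
  by rewrite mulr_sumr -!big_split; apply: eq_bigr => i _ /=; rewrite mxE; ring.
by rewrite lerD2r lerD2l mulr_natl ler_pMn2r ?CauchySchwarz_sum.
Qed.

Lemma edistC u v : edist u v = edist v u.
Proof. by rewrite /edist -enormN opprB. Qed.

Lemma edist_triangle u v w : edist u w <= edist u v + edist v w.
Proof.
rewrite /edist; have -> : u - w = (u - v) + (v - w) by rewrite addrA subrK.
exact: enormD.
Qed.

Lemma ler_enorm_dist u v : `|enorm u - enorm v| <= enorm (u - v).
Proof.
have := enormD (u - v) v; have := enormD (v - u) u.
rewrite !subrK -opprB enormN ler_norml => *; apply/andP; split; lra.
Qed.

Lemma coord_le_enorm v i : `|v ord0 i| <= enorm v.
Proof.
rewrite -sqrtr_sqr /enorm ler_sqrt ?sumsq_ge0 // (bigD1 i) //= lerDl.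
by apply: sumr_ge0 => j _; exact: sqr_ge0.
Qed.

Lemma coord_le_normr v i : `|v ord0 i| <= `|v|.
Proof.
rewrite [leRHS]mx_normrE.
exact: (le_bigmax _ (fun ij : 'I_1 * 'I_d => `|v ij.1 ij.2|) (ord0, i)).
Qed.

Lemma normr_le_enorm v : `|v| <= enorm v.
Proof.
rewrite [leLHS]mx_normrE; apply: bigmax_le => [|[i j] _]; first exact: enorm_ge0.
by rewrite (ord1 i); exact: coord_le_enorm.
Qed.

Lemma enorm_le_normr v : enorm v <= d%:R * `|v|.
Proof.
rewrite -(ger0_norm (mulr_ge0 (ler0n _ d) (normr_ge0 v))) -sqrtr_sqr.
rewrite /enorm ler_sqrt ?sqr_ge0 //.
apply: (@le_trans _ _ (\sum_(i < d) `|v| ^+ 2)).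
  apply: ler_sum => i _; rewrite -real_normK ?num_real // lerXn2r ?nnegrE //.
  exact: coord_le_normr.
rewrite sumr_const card_ord exprMn -[leLHS]mulr_natl ler_wpM2r ?sqr_ge0 //.
by rewrite -natrX ler_nat; case: d => // n; rewrite expnS leq_pmulr.
Qed.

Lemma continuous_edist (p : 'rV[R]_d) : continuous (edist ^~ p).
Proof.
move=> v; apply/(@cvgrPdist_lt _ _ _ (nbhs v)) => e e0.
have d1_gt0 : 0 < d%:R + 1 :> R by rewrite ltr_wpDl.
near=> w; apply: le_lt_trans (ler_enorm_dist _ _) _.
rewrite opprB addrA subrK; apply: (le_lt_trans (enorm_le_normr _)).
apply: (@le_lt_trans _ _ ((d%:R + 1) * `|v - w|)); first by rewrite ler_wpM2r ?lerDl.
rewrite mulrC -ltr_pdivlMr //; near: w.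
by apply: cvgr_dist_lt; [exact: cvg_id | rewrite divr_gt0].
Unshelve. all: by end_near.
Qed.

End EuclideanNorm.

Section Hulloid.
Context {R : realType} {d : nat}.
Notation V := 'rV[R]_d.
Implicit Types (r : R) (E S : set V).

Lemma edist_line (c u : V) (s t : R) :
  edist (c + t *: u) (c + s *: u) = `|t - s| * enorm u.
Proof. by rewrite /edist opprD addrACA subrr add0r -scalerBl enormZ. Qed.

Lemma NR_not_interior r S a v : 0 < r -> NR r S a v -> ~ S° a.
Proof.
move=> r_gt0 [v1 Sv] /nbhs_ballP[e /= e_gt0 aS].
have {}v1 : enorm v = 1 := v1.
pose t := Num.min (e / 2) (r / 2).
have t_gt0 : 0 < t by rewrite lt_min !divr_gt0.
have t_lt_e : t < e by rewrite gt_min; apply/orP; left; lra.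
have t_lt_r : t < r by rewrite gt_min; apply/orP; right; lra.
suff : (S `&` eball (a + r *: v) r) (a + t *: v) by rewrite Sv.
split; last by rewrite /eball /= edist_line v1 mulr1 ltr0_norm ?subr_lt0 //; lra.
apply: aS; rewrite -ball_normE /= opprD addrA subrr sub0r normrN.
by apply: le_lt_trans (normr_le_enorm _) _; rewrite enormZ v1 mulr1 gtr0_norm.
Qed.

Lemma sub_hulloid r E : E `<=` hulloid r E.
Proof. by move=> x Ex c cE cx; have : (eball c r `&` E) x by []; rewrite cE. Qed.

Lemma hulloid_disjoint r E c :
  E `&` eball c r = set0 -> hulloid r E `&` eball c r = set0.
Proof.
by move=> Ec; apply/seteqP; split => // x [Ax cx]; apply: (Ax c _ cx); rewrite setIC.
Qed.

Lemma NR_hulloid r E a : NR r (hulloid r E) a = NR r E a.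
Proof.
apply/seteqP; split => v [v1 Sv]; split => //; last exact: hulloid_disjoint.
exact: subsetI_eq0 (@sub_hulloid r E) (subset_refl _) Sv.
Qed.

Lemma bdry_sub_hulloid r E : 0 < r -> Rsupported r E ->
  bdry E `<=` bdry (hulloid r E).
Proof.
move=> r_gt0 [_ supported] a Ea; split; first exact: closureS (@sub_hulloid r E) _ Ea.1.
have [v Nv] := supported a Ea.
by apply: (@NR_not_interior r _ a v r_gt0); rewrite NR_hulloid.
Qed.

Lemma hulloid_sub_nbhdR r E : 0 < r -> hulloid r E `<=` nbhdR r E.
Proof.
move=> r_gt0 x Ax; apply: contrapT => Ex.
apply: (Ax x); last by rewrite /eball /edist /= subrr enorm0.
by apply/seteqP; split => // y [xy Ey]; apply: Ex; exists y; rewrite // edistC.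
Qed.

Lemma edist_attained r E p : closed E ->
  (forall e, 0 < e -> exists2 y, E y & edist y p < r + e) ->
  exists2 a, E a & edist a p <= r.
Proof.
move=> E_closed near_p.
pose K := E `&` [set y | edist y p <= r + 1].
have [y0 Ey0 y0p] := near_p 1 ltr01.
have K_compact : compact K.
  apply: bounded_closed_compact.
    exists (r + 1 + enorm p); split; first exact: num_real.
    move=> M M_gt y [_ /= yp]; apply: le_trans (normr_le_enorm _) _.
    rewrite -[y](subrK p); apply: le_trans (enormD _ _) _.
    by apply: ltW; apply: le_lt_trans M_gt; rewrite lerD2r.
  apply: closedI => //.
  apply: (@preimage_closed _ _ (edist ^~ p) [set t | t <= r + 1]); last exact: closed_le.
  by move=> z _; exact: continuous_edist.
have [||a aK a_min] := @compact_EVT_min _ R (edist ^~ p) K _ K_compact _.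
- by exists y0; split => //=; rewrite ltW.
- by apply: continuous_subspaceT; exact: continuous_edist.
move: aK; rewrite inE => -[Ea _]; exists a => //; apply/ler_addgt0Pr => e e_gt0.
have e1_gt0 : 0 < Num.min e 1 by rewrite lt_min e_gt0 ltr01.
have [y Ey yp] := near_p _ e1_gt0.
have : edist a p <= edist y p.
  apply: a_min; rewrite inE; split => //=.
  by rewrite ltW // (lt_le_trans yp) // lerD2l ge_min lexx orbT.
have : Num.min e 1 <= e by rewrite ge_min lexx.
lra.
Qed.

Lemma contact_point_supporting r E c : 0 < r -> closed E ->
  eball c r `&` E = set0 ->
  (forall e, 0 < e -> exists2 y, E y & edist y c < r + e) ->
  exists a theta, [/\ bdry E a, NR r E a theta & a + r *: theta = c].
Proof.
move=> r_gt0 E_closed cE near_c.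
have [a Ea ac_le] := @edist_attained r E c E_closed near_c.
have ac : edist a c = r.
  apply/eqP; rewrite eq_le ac_le leNgt; apply/negP => ac_lt.
  by have : (eball c r `&` E) a by []; rewrite cE.
pose theta := r^-1 *: (c - a).
have center : a + r *: theta = c.
  by rewrite /theta scalerA mulfV ?gt_eqF // scale1r addrC subrK.
have N_theta : NR r E a theta.
  split.
    rewrite /usphere /= enormZ -enormN opprB -/(edist a c) ac.
    by rewrite gtr0_norm ?mulVf ?invr_gt0 ?gt_eqF.
  rewrite center setIC; apply/seteqP; split => // y [yc Ey].
  by have : (eball c r `&` E) y by []; rewrite cE.
exists a, theta; split => //; split; first exact: subset_closure.
exact: NR_not_interior r_gt0 N_theta.
Qed.

Lemma slide_ball_to_contact r E c x :
  nbhdR r E x -> eball c r `&` E = set0 -> eball c r x ->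
  exists c', [/\ eball c' r `&` E = set0, eball c' r x &
    forall e, 0 < e -> exists2 y, E y & edist y c' < r + e].
Proof.
move=> [y0 Ey0 xy0] cE cx.
pose u := x - c; pose n := enorm u; pose ct t := c + t *: u.
have n_ge0 : 0 <= n := enorm_ge0 u.
have n_lt_r : n < r := cx.
have n1_gt0 : 0 < n + 1 by lra.
have ct0 : ct 0 = c by rewrite /ct scale0r addr0.
have ct1 : ct 1 = x by rewrite /ct scale1r addrC subrK.
have ct_shift t s y : edist y (ct t) <= edist y (ct s) + `|s - t| * n.
  by apply: le_trans (edist_triangle _ (ct s) _) _; rewrite edist_line.
have small k : 0 < k -> k / (n + 1) * n < k.
  by move=> k_gt0; rewrite mulrAC ltr_pdivrMr // mulrDr mulr1 ltrDl.
pose T := [set t | 0 <= t <= 1 /\ exists2 y, E y & edist y (ct t) < r].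
have T1 : T 1 by split; [rewrite ler01 lexx | exists y0; rewrite // ct1 edistC].
have T_inf : has_inf T by split; [exists 1 | exists 0 => t [/andP[]]].
pose s := inf T.
have s_ge0 : 0 <= s by apply: lb_le_inf; [exists 1 | move=> t [/andP[]]].
have s_le1 : s <= 1 by apply: (ge_inf T_inf.2).
exists (ct s); split.
- apply/seteqP; split => // y [ys Ey].
  move: s_ge0; rewrite le_eqVlt => /predU1P[s_eq0|s_gt0].
    have : (eball c r `&` E) y by split => //; rewrite /eball /= -ct0 s_eq0.
    by rewrite cE.
  pose eta := Num.min s ((r - edist y (ct s)) / (n + 1)).
  have eta_gt0 : 0 < eta by rewrite lt_min s_gt0 divr_gt0 ?subr_gt0.
  have eta_le_s : eta <= s by rewrite ge_min lexx.
  have eta_n : eta * n < r - edist y (ct s).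
    apply: le_lt_trans (small _ _); last by rewrite subr_gt0.
    by rewrite ler_wpM2r // ge_min lexx orbT.
  have : T (s - eta).
    split; first by apply/andP; split; lra.
    exists y => //; apply: le_lt_trans (ct_shift _ s _) _.
    have -> : s - (s - eta) = eta by lra.
    by rewrite gtr0_norm //; lra.
  by move/(ge_inf T_inf.2); lra.
- rewrite /eball /= -ct1 edist_line ger0_norm ?subr_ge0 // -/n.
  by have := mulr_ge0 s_ge0 n_ge0; lra.
- move=> e e_gt0.
  have [t Tt t_lt] := inf_adherent (divr_gt0 e_gt0 n1_gt0) T_inf.
  have s_le_t : s <= t := ge_inf T_inf.2 Tt.
  case: Tt => _ [y Ey yt].
  exists y => //; apply: le_lt_trans (ct_shift _ t _) _.
  rewrite ger0_norm ?subr_ge0 //.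
  have := small _ e_gt0; have : (t - s) * n <= e / (n + 1) * n.
    by rewrite ler_wpM2r //; lra.
  lra.
Qed.

Lemma hulloidE r E : 0 < r -> closed E ->
  hulloid r E = nbhdR r E `&`
    [set x | forall a theta, bdry E a -> NR r E a theta -> ~ eball (a + r *: theta) r x].
Proof.
move=> r_gt0 E_closed; apply/seteqP; split.
  move=> x Ax; split; first exact: hulloid_sub_nbhdR.
  by move=> a theta _ [_ Ntheta]; apply: Ax; rewrite setIC.
move=> x [Ex x_out] c cE cx.
have [c' [c'E c'x contact]] := @slide_ball_to_contact r E c x Ex cE cx.
have [a [theta [Ea Ntheta center]]] :=
  @contact_point_supporting r E c' r_gt0 E_closed c'E contact.
by apply: (x_out a theta Ea Ntheta); rewrite center.
Qed.

End Hulloid.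

Theorem mainTheorem2 (R : realType) (d : nat) (r : R) (E : set 'rV[R]_d) :
  0 < r -> Rsupported r E ->
  [/\ bdry E `<=` bdry (hulloid r E),
      E° `<=` (hulloid r E)°,
      (forall a, bdry E a -> NR r E a = NR r (hulloid r E) a) &
      hulloid r E =
        nbhdR r E `&`
        [set x | forall a theta, bdry E a -> NR r E a theta ->
                   ~ eball (a + r *: theta) r x]].
Proof.
move=> r_gt0 supported; have [[E_closed _] _] := supported.
split.
- exact: bdry_sub_hulloid.
- exact/interiorS/sub_hulloid.
- by move=> a _; rewrite NR_hulloid.
- exact: hulloidE.
Qed.
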